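(* For every integer $n\ge1$, $$\mathrm{He}_{(n,n)}(0)=\begin{cases}\dfrac{(n!)^2}{2^{n-1}\left(\frac{n-1}{2}\right)!^2}, & n\text{ odd},\\[2mm] (n+1)\dfrac{(n!)^2}{2^{n}\left(\frac{n}{2}\right)!^2}, & n\text{ even}.\end{cases}$$ In particular, $\mathrm{He}_{(n,n)}(0)$ is a perfect square $r^2$ ($r\ge1$ an integer) when $n$ is odd, and is of the form $(n+1)r^2$ with $r\ge1$ an integer when $n$ is even.
   Context: $\mathrm{He}_k(x)$ denotes the monic probabilists' Hermite polynomial of degree $k$. For a partition $\lambda=(\lambda_1\ge\dots\ge\lambda_r\ge0)$ the degree sequence is $n_\lambda=(\lambda_r,\lambda_{r-1}+1,\dots,\lambda_1+r-1)$, and $\mathrm{He}_\lambda(x)=\mathrm{Wr}[\mathrm{He}_{n_1},\dots,\mathrm{He}_{n_r}]/\prod_{i<j}(n_j-n_i)$ where $n_\lambda=(n_1,\dots,n_r)$. Thus $\mathrm{He}_{(n,n)}=\mathrm{Wr}[\mathrm{He}_n,\mathrm{He}_{n+1}]$. *)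

From mathcomp Require Import all_boot all_order all_algebra.
Set Implicit Arguments. Unset Strict Implicit. Unset Printing Implicit Defensive.
Import GRing.Theory Num.Theory.
Local Open Scope ring_scope.

(* Monic probabilists' Hermite polynomials:
   He_0 = 1, He_1 = X, He_{k+2} = X He_{k+1} - (k+1) He_k. *)
Fixpoint He_pair (k : nat) : {poly rat} * {poly rat} :=
  match k with
  | 0%N => (1, 'X)
  | k'.+1 => let (a, b) := He_pair k' in (b, 'X * b - (k'.+1)%:R *: a)
  end.

Definition He (k : nat) : {poly rat} := (He_pair k).1.

Definition Wr2 (f g : {poly rat}) : {poly rat} := f * g^`() - f^`() * g.

(* He_{(n,n)}: degree sequence (n, n+1), normalising product (n+1)-n = 1. *)
Definition He_nn (n : nat) : {poly rat} := Wr2 (He n) (He n.+1).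

From mathcomp Require Import all_boot all_order all_algebra.
From mathcomp Require Import ring.
Import GRing.Theory Num.Theory.
Local Open Scope ring_scope.

(* The Hermite polynomials satisfy He_(k+2) = X He_(k+1) - (k+1) He_k and
   He_(k+1)' = (k+1) He_k.  Evaluating at 0, the odd ones vanish and
   He_(2m)(0) = (-1)^m (2m-1)!!, where (2m-1)!! = 1*3*...*(2m-1).  Since
   Wr[f, g](0) = f(0) g'(0) - f'(0) g(0), the derivative rule gives
     He_(n,n)(0) = (n+1) He_n(0)^2 - n He_(n-1)(0) He_(n+1)(0),
   so exactly one term survives: He_(2m+1,2m+1)(0) = ((2m+1)!!)^2 and
   He_(2m,2m)(0) = (2m+1) ((2m-1)!!)^2.  The closed forms of the theorem
   follow from (2m)! = 2^m m! (2m-1)!!, and the double factorials are the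
   positive integers r asked for in the second half of each case. *)

Lemma He_pairE (k : nat) : He_pair k = (He k, He k.+1).
Proof. by elim: k => [//|k IH]; rewrite /He /= IH. Qed.

Lemma HeSS (k : nat) : He k.+2 = 'X * He k.+1 - k.+1%:R *: He k.
Proof. by rewrite {1}/He /=; case: (He_pair k) (He_pairE k) => a b [-> ->]. Qed.

(* Appell property: He_(k+1)' = (k+1) He_k, proved together with the next
   index so that the recurrence can be differentiated. *)
Lemma He_deriv (k : nat) : (He k.+1)^`() = k.+1%:R *: He k.
Proof.
suff [] : (He k.+1)^`() = k.+1%:R *: He k /\ (He k.+2)^`() = k.+2%:R *: He k.+1
  by [].
elim: k => [|k [IH1 IH2]].
  split; first by rewrite derivX scale1r.
  by rewrite HeSS derivB derivM derivX derivZ derivC scaler0 subr0 mul1r mulr1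
             scalerDl scale1r.
split=> //; rewrite HeSS derivB derivM derivZ IH2 derivX mul1r IH1 HeSS.
by rewrite -!mul_polyC !polyC_natr !mulrS; ring.
Qed.

Fixpoint odd_dfact (m : nat) : nat :=
  if m is m'.+1 then (m'.*2.+1 * odd_dfact m')%N else 1%N.

Lemma odd_dfact_gt0 (m : nat) : (0 < odd_dfact m)%N.
Proof. by elim: m => //= m IH; rewrite muln_gt0 IH. Qed.

(* (2m)! = 2^m m! (2m-1)!!: split the factors of (2m)! by parity. *)
Lemma fact_double (m : nat) : (m.*2)`! = (2 ^ m * m`! * odd_dfact m)%N.
Proof. by elim: m => [//|m IH]; rewrite doubleS !factS IH /= expnS -!mul2n; ring. Qed.

Lemma odd_dfactE (m : nat) :
  (odd_dfact m)%:R = (m.*2)`!%:R / (2 ^+ m * m`!%:R) :> rat.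
Proof.
rewrite fact_double !natrM natrX mulrAC divff ?mul1r // mulf_neq0 ?expf_neq0 //.
by rewrite pnatr_eq0 -lt0n fact_gt0.
Qed.

Lemma He_at0 (m : nat) :
  (He m.*2).[0] = (-1) ^+ m * (odd_dfact m)%:R /\ (He m.*2.+1).[0] = 0.
Proof.
elim: m => [|m [IHeven IHodd]]; first by rewrite !hornerE expr0 ?mul1r.
rewrite doubleS !HeSS !hornerE IHeven IHodd /= natrM exprS.
by split; ring.
Qed.

Lemma He_even0 (m : nat) : (He m.*2).[0] = (-1) ^+ m * (odd_dfact m)%:R.
Proof. by case: (He_at0 m). Qed.

Lemma He_odd0 (m : nat) : (He m.*2.+1).[0] = 0.
Proof. by case: (He_at0 m). Qed.

Lemma He_nn_at0 (k : nat) :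
  (He_nn k.+1).[0] =
  k.+2%:R * (He k.+1).[0] ^+ 2 - k.+1%:R * ((He k).[0] * (He k.+2).[0]).
Proof.
by rewrite /He_nn /Wr2 !He_deriv hornerD hornerN !hornerM !hornerZ; ring.
Qed.

Lemma He_nn_odd0 (m : nat) : (He_nn m.*2.+1).[0] = (odd_dfact m.+1)%:R ^+ 2.
Proof.
rewrite He_nn_at0 -doubleS He_odd0 !He_even0 /= natrM.
by rewrite -[RHS]mul1r -[X in _ = X * _](sqrr_sign _ m) (exprS _ m); ring.
Qed.

Lemma He_nn_even0 (m : nat) :
  (He_nn m.*2).[0] = (m.*2.+1)%:R * (odd_dfact m)%:R ^+ 2.
Proof.
case: m => [|m]; first by rewrite /He_nn /Wr2 /= derivX derivC !hornerE.
rewrite doubleS He_nn_at0 He_odd0 -doubleS !He_even0 /=.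
by rewrite -[RHS]mul1r -[X in _ = X * _](sqrr_sign _ m) (exprS _ m); ring.
Qed.

Lemma sq_over_fact (m : nat) (x : rat) :
  x ^+ 2 / (2 ^+ m.*2 * m`!%:R ^+ 2) = (x / (2 ^+ m * m`!%:R)) ^+ 2.
Proof. by rewrite -muln2 exprM -exprMn expr_div_n. Qed.

Lemma odd_dfactS_sq (m : nat) :
  (odd_dfact m.+1)%:R ^+ 2 = (m.*2.+1)`!%:R ^+ 2 / (2 ^+ m.*2 * m`!%:R ^+ 2) :> rat.
Proof. by rewrite sq_over_fact /= natrM odd_dfactE factS natrM mulrA. Qed.

Lemma odd_dfact_sq (m : nat) :
  (odd_dfact m)%:R ^+ 2 = (m.*2)`!%:R ^+ 2 / (2 ^+ m.*2 * m`!%:R ^+ 2) :> rat.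
Proof. by rewrite sq_over_fact odd_dfactE. Qed.

Theorem mainTheorem12 (n : nat) : (1 <= n)%N ->
  ((odd n ->
     (He_nn n).[0] = (n`!%:R ^+ 2) / (2 ^+ n.-1 * ((n.-1)./2)`!%:R ^+ 2)
     /\ exists r : nat, (1 <= r)%N /\ (He_nn n).[0] = (r%:R) ^+ 2)
  /\
  (~~ odd n ->
     (He_nn n).[0] = n.+1%:R * ((n`!%:R ^+ 2) / (2 ^+ n * (n./2)`!%:R ^+ 2))
     /\ exists r : nat, (1 <= r)%N /\ (He_nn n).[0] = n.+1%:R * (r%:R) ^+ 2)).
Proof.
move=> _; rewrite -(odd_double_half n); set m := n./2.
case: (odd n) => /=; rewrite ?odd_double /=; split=> // _.
- rewrite doubleK He_nn_odd0 odd_dfactS_sq; split=> //.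
  by exists (odd_dfact m.+1); rewrite odd_dfact_gt0 odd_dfactS_sq.
- rewrite add0n doubleK He_nn_even0 odd_dfact_sq; split=> //.
  by exists (odd_dfact m); rewrite odd_dfact_gt0 odd_dfact_sq.
Qed.
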